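(* Let $\Phi$ be an extremal instance and fix a resampling table $(\omega_{i,j})$. Suppose that, for some sequence of choices of false clauses, $\mathrm{PRS}(\Phi,\mathcal D)$ run on this table terminates with a certain transcript. Then, for every other sequence of choices of false clauses, $\mathrm{PRS}(\Phi,\mathcal D)$ run on the same table also terminates, and it terminates with the same transcript, after the same number of iterations.
   Context: Setting: For $i\in[n]$, $X_i$ takes values in a countable set $D_i$ equipped with a probability distribution $\mathcal D_i$; $\mathcal D=\mathcal D_1\times\cdots\times\mathcal D_n$ is the product distribution. A formula $\Phi=\phi_1\wedge\cdots\wedge\phi_m$ is a conjunction of clauses. Each clause $\phi_k$ is a Boolean function of the variables $X_i$ with $i\in\mathrm{Scp}(\phi_k)$, where $\mathrm{Scp}(\phi_k)\subseteq[n]$ is a nonempty set called the scope of $\phi_k$. The instance $\Phi$ is extremal if for all $1\le k<\ell\le m$ with $\mathrm{Scp}(\phi_k)\cap\mathrm{Scp}(\phi_\ell)\neq\emptyset$, the formula $\phi_k\vee\phi_\ell$ is true under every assignment. Algorithm $\mathrm{PRS}(\Phi,\mathcal D)$: sample $\mathbf X$ from $\mathcal D$. While $\Phi(\mathbf X)$ is false, choose any clause $\phi_k$ false under the current $\mathbf X$ and resample all $X_i$, $i\in\mathrm{Scp}(\phi_k)$, from $\mathcal D_i$. Resampling table: an array $(\omega_{i,j}: i\in[n],\ j\in\{0,1,2,\dots\})$ with each $\omega_{i,j}\in D_i$. Running PRS on the table means the following. Let $j(i,0)=0$ and $X_i^0=\omega_{i,0}$. In iteration $t$, where the scope $\mathrm{Scp}(\phi_{k_t})$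 of a clause $\phi_{k_t}$ false at time $t-1$ is resampled, set $j(i,t)=j(i,t-1)+1$ for $i\in\mathrm{Scp}(\phi_{k_t})$ and $j(i,t)=j(i,t-1)$ otherwise, and let $X_i^t=\omega_{i,j(i,t)}$. Thus only the choice of clauses remains free. The frontier at time $t$ is $F(t)=(j(1,t),\dots,j(n,t))$. Each iteration $t$ creates a resampling block $\{(i,j(i,t-1)): i\in\mathrm{Scp}(\phi_{k_t})\}$; these blocks partition $\{(i,j): j<j(i,t)\}$. The transcript at time $t$ is the frontier $F(t)$ together with this partition into resampling blocks. *)

From HB Require Import structures.
From mathcomp Require Import all_boot.
From mathcomp Require Import finmap.

Set Implicit Arguments.
Unset Strict Implicit.
Unset Printing Implicit Defensive.

Local Open Scope fset_scope.

Section PRS.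

(* n variables X_i, i : 'I_n, with X_i valued in the countable set D i;
   m clauses phi_k, k : 'I_m, with scopes scp k. *)
Variables (n m : nat) (D : 'I_n -> countType).
Variables (scp : 'I_m -> {set 'I_n}) (phi : 'I_m -> (forall i, D i) -> bool).

Definition scopes_nonempty : Prop := forall k, scp k != set0.

Definition clauses_local : Prop :=
  forall k (x y : forall i, D i),
    (forall i, i \in scp k -> x i = y i) -> phi k x = phi k y.

Definition Phi (x : forall i, D i) : bool := [forall k, phi k x].

Definition extremal : Prop :=
  forall k l : 'I_m, (k < l)%N -> scp k :&: scp l != set0 ->
    forall x : forall i, D i, phi k x || phi l x.

Variable omega : forall i, nat -> D i.

(* Frontier after running the sequence of clause choices s:
   F(t) = (j(1,t),...,j(n,t)), j(i,0) = 0, and j(i,t) = j(i,t-1) + [i in Scp(phi_{k_t})]. *)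
Definition frontier_step (F : {ffun 'I_n -> nat}) (k : 'I_m) : {ffun 'I_n -> nat} :=
  [ffun i => (F i + (i \in scp k))%N].

Definition frontier (s : seq 'I_m) : {ffun 'I_n -> nat} :=
  foldl frontier_step [ffun => 0%N] s.

(* Current assignment X^t_i = omega_{i, j(i,t)}. *)
Definition state (F : {ffun 'I_n -> nat}) : forall i, D i := fun i => omega i (F i).

Definition valid_run (s : seq 'I_m) : Prop :=
  forall (s1 : seq 'I_m) (k : 'I_m) (s2 : seq 'I_m),
    s = s1 ++ k :: s2 -> phi k (state (frontier s1)) = false.

Definition terminating_run (s : seq 'I_m) : Prop :=
  valid_run s /\ Phi (state (frontier s)).

Definition block (F : {ffun 'I_n -> nat}) (k : 'I_m) : {fset ('I_n * nat)} :=
  [fset p | p in [seq (i, F i) | i <- enum (scp k)]].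

Fixpoint blocks_from (pre s : seq 'I_m) : {fset {fset ('I_n * nat)}} :=
  match s with
  | [::] => fset0
  | k :: s' => block (frontier pre) k |` blocks_from (rcons pre k) s'
  end.

Definition transcript (s : seq 'I_m) : {ffun 'I_n -> nat} * {fset {fset ('I_n * nat)}} :=
  (frontier s, blocks_from [::] s).

End PRS.

From HB Require Import structures.
From mathcomp Require Import all_boot.
From mathcomp Require Import finmap.

Set Implicit Arguments.
Unset Strict Implicit.
Unset Printing Implicit Defensive.

Local Open Scope fset_scope.

(* Two
   clauses that are false at the same time have disjoint scopes (this is
   extremality), so resampling one of them neither changes the truth value
   of the other nor the block the other would create; moreover resampling
   steps always commute on frontiers.  Hence two adjacent steps on disjoint
   scopes may be swapped without changing validity, final frontier or set
   of blocks.

   Consequently, if l is false at F and s is a terminating run from F, then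
   l must be resampled somewhere in s, every clause before it is disjoint
   from l, and s can be rearranged into an equivalent run l :: s0.  The
   theorem follows by induction on the length of the terminating run: any
   other valid run l :: s'' is compared with l :: s0 after its first step. *)

Section Confluence.

Variables (n m : nat) (D : 'I_n -> countType).
Variables (scp : 'I_m -> {set 'I_n}) (phi : 'I_m -> (forall i, D i) -> bool).
Variable omega : forall i, nat -> D i.

Definition run_from (F : {ffun 'I_n -> nat}) (s : seq 'I_m) : {ffun 'I_n -> nat} :=
  foldl (frontier_step scp) F s.

Fixpoint valid_from (F : {ffun 'I_n -> nat}) (s : seq 'I_m) : Prop :=
  if s is k :: r then
    phi k (state omega F) = false /\ valid_from (frontier_step scp F k) r
  else True.

Fixpoint blocks_at (F : {ffun 'I_n -> nat}) (s : seq 'I_m) :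
    {fset {fset ('I_n * nat)}} :=
  if s is k :: r then block scp F k |` blocks_at (frontier_step scp F k) r
  else fset0.

Lemma valid_from_prefixes (F : {ffun 'I_n -> nat}) (s : seq 'I_m) :
  (forall s1 k s2, s = s1 ++ k :: s2 ->
     phi k (state omega (run_from F s1)) = false) ->
  valid_from F s.
Proof.
elim: s F => [|k r IH] F //= Hpre; split; first exact: (Hpre [::] k r).
by apply: IH => s1 l s2 Es; apply: (Hpre (k :: s1) l s2); rewrite Es.
Qed.

Lemma valid_run_valid_from (s : seq 'I_m) :
  valid_run scp phi omega s -> valid_from [ffun => 0%N] s.
Proof. exact: valid_from_prefixes. Qed.

Lemma blocks_from_at (pre s : seq 'I_m) :
  blocks_from scp pre s = blocks_at (frontier scp pre) s.
Proof.
elim: s pre => [|k r IH] pre //=.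
by rewrite IH /frontier foldl_rcons.
Qed.

Lemma frontier_step_comm (F : {ffun 'I_n -> nat}) (k l : 'I_m) :
  frontier_step scp (frontier_step scp F k) l =
  frontier_step scp (frontier_step scp F l) k.
Proof. by apply/ffunP => i; rewrite !ffunE addnAC. Qed.

Lemma frontier_step_disjoint (F : {ffun 'I_n -> nat}) (k l : 'I_m) i :
  scp k :&: scp l = set0 -> i \in scp l -> frontier_step scp F k i = F i.
Proof.
move=> dkl il; rewrite ffunE; case: (boolP (i \in scp k)) => [ik|_].
  by move/setP: dkl => /(_ i); rewrite !inE ik il.
by rewrite addn0.
Qed.

Lemma block_step_disjoint (F : {ffun 'I_n -> nat}) (k l : 'I_m) :
  scp k :&: scp l = set0 ->
  block scp (frontier_step scp F k) l = block scp F l.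
Proof.
move=> dkl; rewrite /block.
suff -> : [seq (i, frontier_step scp F k i) | i <- enum (scp l)] =
          [seq (i, F i) | i <- enum (scp l)] by [].
apply/eq_in_map => i; rewrite mem_enum => il.
by rewrite (frontier_step_disjoint F dkl il).
Qed.

Hypothesis Hloc : clauses_local scp phi.
Hypothesis Hext : extremal scp phi.

Lemma phi_step_disjoint (F : {ffun 'I_n -> nat}) (k l : 'I_m) :
  scp k :&: scp l = set0 ->
  phi l (state omega (frontier_step scp F k)) = phi l (state omega F).
Proof.
by move=> dkl; apply: Hloc => i il; rewrite /state (frontier_step_disjoint F dkl il).
Qed.

Lemma false_clauses_disjoint (x : forall i, D i) (k l : 'I_m) :
  k != l -> phi k x = false -> phi l x = false -> scp k :&: scp l = set0.
Proof.
move=> nkl kx lx; apply/eqP/negPn/negP => meet.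
case: (ltngtP k l) => [kl|lk|ekl].
- by have := Hext kl meet x; rewrite kx lx.
- by rewrite setIC in meet; have := Hext lk meet x; rewrite kx lx.
- by move: nkl; rewrite (val_inj ekl) eqxx.
Qed.

Lemma swap_disjoint (F : {ffun 'I_n -> nat}) (k l : 'I_m) (r : seq 'I_m) :
  scp k :&: scp l = set0 -> valid_from F [:: k, l & r] ->
  [/\ valid_from F [:: l, k & r],
      run_from F [:: l, k & r] = run_from F [:: k, l & r] &
      blocks_at F [:: l, k & r] = blocks_at F [:: k, l & r]].
Proof.
move=> dkl /= [kF [lF vr]]; have dlk : scp l :&: scp k = set0 by rewrite setIC.
rewrite /run_from /= frontier_step_comm.
rewrite (block_step_disjoint F dkl) (block_step_disjoint F dlk).
rewrite !fsetUA (fsetUC [fset block scp F l]).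
by rewrite -(phi_step_disjoint F dkl) (phi_step_disjoint F dlk).
Qed.

Lemma resample_first (l : 'I_m) (s : seq 'I_m) (F : {ffun 'I_n -> nat}) :
  valid_from F s -> Phi phi (state omega (run_from F s)) ->
  phi l (state omega F) = false ->
  exists s0 : seq 'I_m,
    [/\ (size s0).+1 = size s, valid_from F (l :: s0),
        run_from F (l :: s0) = run_from F s &
        blocks_at F (l :: s0) = blocks_at F s].
Proof.
elim: s F => [|k r IH] F.
  by move=> _ /forallP /(_ l) ->.
move=> /= [kF vr] term lF; have [<-|nkl] := eqVneq k l; first by exists r.
have dkl := false_clauses_disjoint nkl kF lF.
have lFk : phi l (state omega (frontier_step scp F k)) = false.
  by rewrite phi_step_disjoint.
have [r0 [sz vr0 run0 blk0]] := IH _ vr term lFk.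
have [vs runs blks] := swap_disjoint dkl (conj kF vr0 : valid_from F [:: k, l & r0]).
exists (k :: r0); split; [by rewrite /= sz | by [] | |].
- exact: etrans runs run0.
- by rewrite -blk0; exact: blks.
Qed.

Lemma confluence (s : seq 'I_m) (F : {ffun 'I_n -> nat}) :
  valid_from F s -> Phi phi (state omega (run_from F s)) ->
  forall s' : seq 'I_m, valid_from F s' ->
    size s' <= size s /\
    (Phi phi (state omega (run_from F s')) ->
       [/\ size s' = size s, run_from F s' = run_from F s &
           blocks_at F s' = blocks_at F s]).
Proof.
elim: {s}(size s) {-2}s (erefl (size s)) F => [|N IH] s sz F vs term.
  move: sz term => /size0nil -> /forallP Phi_F [|l s'] //= [lF _].
  by move: (Phi_F l); rewrite lF.
case=> [|l s'] /=.
  move=> _; split=> // /forallP Phi_F.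
  case: s sz vs term => [|k r] //= _ [kF _] _.
  by move: (Phi_F k); rewrite kF.
move=> [lF vs'].
(* Rearrange s to start with l as s' does, then compare the two tails. *)
have [s0 [sz0 [_ vs0] run0 blk0]] := resample_first vs term lF.
have term0 : Phi phi (state omega (run_from (frontier_step scp F l) s0)).
  by move: run0; rewrite /run_from /= => ->.
have size_s0 : size s0 = N by apply: succn_inj; rewrite sz0 sz.
have [le_s' eq_s'] := IH s0 size_s0 _ vs0 term0 s' vs'.
split; first by rewrite -sz0 ltnS.
move=> /eq_s' [-> run' blk']; split; first by rewrite -sz0.
- by rewrite run' -run0.
- by rewrite blk' -blk0.
Qed.

End Confluence.

Theorem lemma2 (n m : nat) (D : 'I_n -> countType)
    (scp : 'I_m -> {set 'I_n}) (phi : 'I_m -> (forall i, D i) -> bool)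
    (Hne : scopes_nonempty scp) (Hloc : clauses_local scp phi)
    (Hext : extremal scp phi)
    (omega : forall i, nat -> D i) (s : seq 'I_m) :
  terminating_run scp phi omega s ->
  forall s' : seq 'I_m, valid_run scp phi omega s' ->
    (size s' <= size s)%N /\
    (Phi phi (state omega (frontier scp s')) ->
       size s' = size s /\ transcript scp s' = transcript scp s).
Proof.
move=> [vs term] s' vs'.
have [le_s' eq_s'] := confluence Hloc Hext (valid_run_valid_from vs) term
                        (valid_run_valid_from vs').
split=> // /eq_s' [sz run blk]; split=> //.
by rewrite /transcript !blocks_from_at; congr (_, _).
Qed.
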